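(* Consider any algorithm for two-party interactive communication over a public noisy channel that works with an unknown number $T$ of adversarial bit flips and that always terminates when there is no noise. Then any such algorithm succeeds with probability at most $1/2$ (against a suitable adversary).
   Context: Interactive communication: Alice and Bob, each holding their own input, wish to compute the transcript of a noise-free two-party protocol of length $L$ by communicating over a binary channel on which an adversary may flip bits; the total number of flips $T$ is not known to the parties. The channel is public: the adversary knows the algorithm and sees every bit sent over the channel, and can set the bits received by a party. Success means each party outputs the correct transcript of the input protocol. *)

From HB Require Import structures.
From mathcomp Require Import all_boot all_order all_algebra.
From mathcomp Require Import all_classical all_reals all_analysis.

Set Implicit Arguments.
Unset Strict Implicit.
Unset Printing Implicit Defensive.

Record protocol (X Y : Type) := Protocol {
  speaker : nat -> bool;                     (* true = Alice speaks *)
  msgA    : nat -> X -> seq bool -> bool;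
  msgB    : nat -> Y -> seq bool -> bool }.

Definition proto_round (X Y : Type) (pi : protocol X Y) (x : X) (y : Y)
  (tr : seq bool) (i : nat) : seq bool :=
  rcons tr (if speaker pi i then msgA pi i x tr else msgB pi i y tr).

Definition transcript (X Y : Type) (pi : protocol X Y) (L : nat)
  (x : X) (y : Y) : seq bool :=
  foldl (proto_round pi x y) [::] (iota 0 L).

(* A channel symbol is [option bool]: [Some b] = the bit b, [None] =   *)
(* silence.  At every time step each still-running party either sends *)
(* a symbol ([Send s]) or halts with an output transcript ([Halt o]).  *)
(* A party's decision depends on its private input, its private random *)
(* string (omega) and the sequence of symbols it has received so far.  *)
Inductive action := Send of option bool | Halt of seq bool.

Record algorithm (X Y OmA OmB : Type) := Algorithm {
  alice : X -> OmA -> seq (option bool) -> action;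
  bob   : Y -> OmB -> seq (option bool) -> action }.

(* A (deterministic) adversary sees the public channel: the sequence of *)
(* pairs (symbol sent by Alice, symbol sent by Bob) of all steps so far, *)
(* including the current one, and sets the pair                         *)
(* (symbol received by Alice, symbol received by Bob) of this step.     *)
Definition adversary := seq (option bool * option bool) -> option bool * option bool.

Definition noiseless : adversary :=
  fun pub => let: (sA, sB) := last (None, None) pub in (sB, sA).

(* Execution state: received history of Alice, her output (once halted),
   received history of Bob, his output, public history. *)
Definition exec_state :=
  (seq (option bool) * option (seq bool) * seq (option bool) * option (seq bool)
   * seq (option bool * option bool))%type.

Definition party_step (a : action) (o : option (seq bool))
  : option bool * option (seq bool) :=
  match o with
  | Some _ => (None, o)
  | None => match a with
            | Send s => (s, None)
            | Halt out => (None, Some out)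
            end
  end.

Definition exec_step (X Y OmA OmB : Type) (alg : algorithm X Y OmA OmB)
  (x : X) (y : Y) (wa : OmA) (wb : OmB) (adv : adversary)
  (st : exec_state) : exec_state :=
  let: (hA, oA, hB, oB, pub) := st in
  let: (sA, oA') := party_step (alice alg x wa hA) oA in
  let: (sB, oB') := party_step (bob alg y wb hB) oB in
  let pub' := rcons pub (sA, sB) in
  let: (rA, rB) := adv pub' in
  (rcons hA rA, oA', rcons hB rB, oB', pub').

Definition exec (X Y OmA OmB : Type) (alg : algorithm X Y OmA OmB)
  (x : X) (y : Y) (wa : OmA) (wb : OmB) (adv : adversary) (t : nat)
  : exec_state :=
  iter t (exec_step alg x y wa wb adv) ([::], None, [::], None, [::]).

Definition outA (s : exec_state) : option (seq bool) := s.1.1.1.2.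
Definition outB (s : exec_state) : option (seq bool) := s.1.2.
Definition pubh (s : exec_state) : seq (option bool * option bool) := s.2.

Definition terminates (X Y OmA OmB : Type) (alg : algorithm X Y OmA OmB)
  (x : X) (y : Y) (wa : OmA) (wb : OmB) (adv : adversary) : Prop :=
  exists t, outA (exec alg x y wa wb adv t) <> None /\
            outB (exec alg x y wa wb adv t) <> None.

Definition succeeds (X Y OmA OmB : Type) (alg : algorithm X Y OmA OmB)
  (x : X) (y : Y) (wa : OmA) (wb : OmB) (adv : adversary)
  (tr : seq bool) : Prop :=
  exists t, outA (exec alg x y wa wb adv t) = Some tr /\
            outB (exec alg x y wa wb adv t) = Some tr.

(* The adversary flips only finitely many symbols in this execution: from
   some step on, every received symbol equals the symbol the other party
   sent at that step.  (At step t the public history has length t.+1.) *)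
Definition finitely_many_flips (X Y OmA OmB : Type)
  (alg : algorithm X Y OmA OmB) (x : X) (y : Y) (wa : OmA) (wb : OmB)
  (adv : adversary) : Prop :=
  exists N, forall t, (N <= t)%N ->
    let pub := pubh (exec alg x y wa wb adv t.+1) in adv pub = noiseless pub.

From HB Require Import structures.
From mathcomp Require Import all_boot all_order all_algebra.
From mathcomp Require Import all_classical all_reals all_analysis.

Set Implicit Arguments.
Unset Strict Implicit.
Unset Printing Implicit Defensive.

Import Order.TTheory GRing.Theory Num.Theory.
Local Open Scope classical_set_scope.

(* The adversary makes each party believe that it talks, without noise, to a fixed
   simulated partner: Alice receives what Bob with input y' and fixed randomness wb0
   would answer to her actual transmissions, and Bob what Alice with input x and
   randomness wa0 would answer to his.  Alice's output then depends only on her own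
   input and randomness, Bob's only on his, so the success event is a product set;
   and once both simulated noiseless executions have halted everybody is silent, so
   only finitely many symbols are altered.  As the protocol is non-trivial, either
   transcript(x,y) <> transcript(x,y'), and Alice on input x, who cannot tell y from
   y', outputs one of the two with probability at most 1/2; or transcript(x,y') <>
   transcript(x',y'), and the same holds for Bob on input y'. *)

Fixpoint replay_out (f : seq (option bool) -> action) (n : nat)
    (h : seq (option bool)) : option (seq bool) :=
  if n is k.+1 then (party_step (f (take k h)) (replay_out f k h)).2 else None.

Definition replay_send (f : seq (option bool) -> action) (h : seq (option bool))
  : option bool := (party_step (f h) (replay_out f (size h) h)).1.

Lemma take_rcons_size (T : Type) (s : seq T) x : take (size s) (rcons s x) = s.
Proof. by rewrite -cats1 take_size_cat. Qed.

Lemma replay_out_rcons f h s n : size h = n ->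
  replay_out f n.+1 (rcons h s) = (party_step (f h) (replay_out f n h)).2.
Proof.
have replay_take k m t : (k <= m)%N -> replay_out f k (take m t) = replay_out f k t.
  by elim: k => [//|k IH] le_km /=; rewrite take_takel ?IH // ltnW.
move=> <- /=; rewrite take_rcons_size.
by rewrite -(replay_take _ _ _ (leqnn _)) take_rcons_size.
Qed.

Definition histA (st : exec_state) : seq (option bool) := st.1.1.1.1.
Definition histB (st : exec_state) : seq (option bool) := st.1.1.2.

Lemma party_step_halted a o : o <> None -> (party_step a o).1 = None.
Proof. by case: o. Qed.

Lemma noiseless_rcons pub sA sB : noiseless (rcons pub (sA, sB)) = (sB, sA).
Proof. by rewrite /noiseless last_rcons. Qed.

Section Execution.
Variables (X Y OmA OmB : Type) (alg : algorithm X Y OmA OmB).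
Variables (x : X) (y : Y) (wa : OmA) (wb : OmB) (adv : adversary).

Let run := exec alg x y wa wb adv.

Lemma exec_succ t (stepA := party_step (alice alg x wa (histA (run t))) (outA (run t)))
    (stepB := party_step (bob alg y wb (histB (run t))) (outB (run t))) :
  [/\ pubh (run t.+1) = rcons (pubh (run t)) (stepA.1, stepB.1),
      histA (run t.+1) = rcons (histA (run t)) (adv (pubh (run t.+1))).1,
      histB (run t.+1) = rcons (histB (run t)) (adv (pubh (run t.+1))).2,
      outA (run t.+1) = stepA.2 & outB (run t.+1) = stepB.2].
Proof.
rewrite {}/stepA {}/stepB /run /= -/(run t).
case: (run t) => [[[[hA oA] hB] oB] pub] /=.
case: (party_step _ oA) => [sA oA']; case: (party_step _ oB) => [sB oB'] /=.
by case E: (adv (rcons pub _)) => [rA rB] /=; rewrite E.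
Qed.

Lemma outA_stable t t' : (t <= t')%N ->
  outA (run t) <> None -> outA (run t') = outA (run t).
Proof.
move=> /subnK <-; case halted: (outA (run t)) => [out | ] // _.
elim: (t' - t) => [//|k IH].
by have [_ _ _ -> _] := exec_succ (k + t); rewrite IH.
Qed.

Lemma outB_stable t t' : (t <= t')%N ->
  outB (run t) <> None -> outB (run t') = outB (run t).
Proof.
move=> /subnK <-; case halted: (outB (run t)) => [out | ] // _.
elim: (t' - t) => [//|k IH].
by have [_ _ _ _ ->] := exec_succ (k + t); rewrite IH.
Qed.

End Execution.

Lemma exec_noiseless (X Y OmA OmB : Type) (alg : algorithm X Y OmA OmB) x y wa wb t
    (st := exec alg x y wa wb noiseless t) :
  [/\ histA st = map snd (pubh st), histB st = map fst (pubh st),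
      outA st = replay_out (alice alg x wa) t (histA st),
      outB st = replay_out (bob alg y wb) t (histB st) & size (pubh st) = t].
Proof.
rewrite {}/st; elim: t => [//|t [eA eB eoA eoB size_pub]].
have [-> -> -> -> ->] := exec_succ alg x y wa wb noiseless t.
have size_hA : size (histA (exec alg x y wa wb noiseless t)) = t by rewrite eA size_map.
have size_hB : size (histB (exec alg x y wa wb noiseless t)) = t by rewrite eB size_map.
rewrite noiseless_rcons (replay_out_rcons _ _ size_hA) (replay_out_rcons _ _ size_hB).
by rewrite /= !map_rcons -eA -eB size_rcons size_pub -eoA -eoB.
Qed.

Lemma replay_sendA_noiseless (X Y OmA OmB : Type) (alg : algorithm X Y OmA OmB) x y wa wb t
    (st := exec alg x y wa wb noiseless t) :
  replay_send (alice alg x wa) (histA st) = (party_step (alice alg x wa (histA st)) (outA st)).1.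
Proof.
have [eA _ eoA _ size_pub] := exec_noiseless alg x y wa wb t.
by rewrite /replay_send -/st eoA eA size_map size_pub.
Qed.

Lemma replay_sendB_noiseless (X Y OmA OmB : Type) (alg : algorithm X Y OmA OmB) x y wa wb t
    (st := exec alg x y wa wb noiseless t) :
  replay_send (bob alg y wb) (histB st) = (party_step (bob alg y wb (histB st)) (outB st)).1.
Proof.
have [_ eB _ eoB size_pub] := exec_noiseless alg x y wa wb t.
by rewrite /replay_send -/st eoB eB size_map size_pub.
Qed.

Definition outA_event (X Y OmA OmB : Type) (alg : algorithm X Y OmA OmB) x y wb s : set OmA :=
  [set wa | exists t, outA (exec alg x y wa wb noiseless t) = Some s].

Definition outB_event (X Y OmA OmB : Type) (alg : algorithm X Y OmA OmB) x y wa s : set OmB :=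
  [set wb | exists t, outB (exec alg x y wa wb noiseless t) = Some s].

Lemma outA_event_disjoint (X Y OmA OmB : Type) (alg : algorithm X Y OmA OmB) x y wb s1 s2 :
  s1 <> s2 -> outA_event alg x y wb s1 `&` outA_event alg x y wb s2 = set0.
Proof.
move=> neq; apply/seteqP; split => // wa [[t1 h1] [t2 h2]]; apply: neq.
suff : Some s1 = Some s2 by case.
rewrite -h1 -h2 -(outA_stable (leq_maxl t1 t2)) ?h1 //.
by rewrite -(outA_stable (leq_maxr t1 t2)) ?h2.
Qed.

Lemma outB_event_disjoint (X Y OmA OmB : Type) (alg : algorithm X Y OmA OmB) x y wa s1 s2 :
  s1 <> s2 -> outB_event alg x y wa s1 `&` outB_event alg x y wa s2 = set0.
Proof.
move=> neq; apply/seteqP; split => // wb [[t1 h1] [t2 h2]]; apply: neq.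
suff : Some s1 = Some s2 by case.
rewrite -h1 -h2 -(outB_stable (leq_maxl t1 t2)) ?h1 //.
by rewrite -(outB_stable (leq_maxr t1 t2)) ?h2.
Qed.

Section Simulation.
Variables (X Y OmA OmB : Type) (alg : algorithm X Y OmA OmB).
Variables (xS : X) (yS : Y) (wa0 : OmA) (wb0 : OmB).

(* The last entry of [pub] holds the symbols sent at the current step, which the
   simulated partners must not see yet. *)
Definition simulating_adv : adversary := fun pub =>
  let past := take (size pub).-1 pub in
  (replay_send (bob alg yS wb0) (map fst past), replay_send (alice alg xS wa0) (map snd past)).

Lemma simulating_adv_rcons pub s : simulating_adv (rcons pub s) =
  (replay_send (bob alg yS wb0) (map fst pub), replay_send (alice alg xS wa0) (map snd pub)).
Proof. by rewrite /simulating_adv size_rcons take_rcons_size. Qed.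

Variables (x : X) (y : Y) (wa : OmA) (wb : OmB).

Let run := exec alg x y wa wb simulating_adv.
Let runA := exec alg x yS wa wb0 noiseless.
Let runB := exec alg xS y wa0 wb noiseless.

Lemma exec_simulating t :
  [/\ histA (run t) = histA (runA t), outA (run t) = outA (runA t),
      histB (run t) = histB (runB t), outB (run t) = outB (runB t)
    & map fst (pubh (run t)) = map fst (pubh (runA t)) /\
      map snd (pubh (run t)) = map snd (pubh (runB t))].
Proof.
elim: t => [//|t [eA eoA eB eoB [efst esnd]]].
have [ep -> -> -> ->] := exec_succ alg x y wa wb simulating_adv t.
have [epA -> _ -> _] := exec_succ alg x yS wa wb0 noiseless t.
have [epB _ -> _ ->] := exec_succ alg xS y wa0 wb noiseless t.
have [eA' eB' _ _ _] := exec_noiseless alg x yS wa wb0 t.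
have [eA'' _ _ _ _] := exec_noiseless alg xS y wa0 wb t.
rewrite ep epA epB simulating_adv_rcons !noiseless_rcons /= !map_rcons.
rewrite efst esnd -eB' -eA'' replay_sendB_noiseless replay_sendA_noiseless.
by rewrite eA eoA eB eoB.
Qed.

Lemma simulating_adv_finitely_many_flips :
  terminates alg x yS wa wb0 noiseless -> terminates alg xS y wa0 wb noiseless ->
  finitely_many_flips alg x y wa wb simulating_adv.
Proof.
move=> [TA [haltedAA haltedAB]] [TB [haltedBA haltedBB]].
exists (maxn TA TB) => t; rewrite geq_max => /andP[leA leB] /=.
have [ep _ _ _ _] := exec_succ alg x y wa wb simulating_adv t.
have [_ eoA _ eoB [efst esnd]] := exec_simulating t.
have [_ eB' _ _ _] := exec_noiseless alg x yS wa wb0 t.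
have [eA' _ _ _ _] := exec_noiseless alg xS y wa0 wb t.
rewrite ep simulating_adv_rcons noiseless_rcons efst esnd -eB' -eA'.
rewrite replay_sendB_noiseless replay_sendA_noiseless eoA eoB.
have [haltedA haltedA'] : outA (runA t) <> None /\ outB (runA t) <> None.
  by rewrite (outA_stable leA) ?(outB_stable leA).
have [haltedB haltedB'] : outA (runB t) <> None /\ outB (runB t) <> None.
  by rewrite (outA_stable leB) ?(outB_stable leB).
by rewrite !party_step_halted.
Qed.

End Simulation.

Lemma succeeds_simulating_adv (X Y OmA OmB : Type) (alg : algorithm X Y OmA OmB)
    xS yS wa0 wb0 x y s :
  [set w : OmA * OmB | succeeds alg x y w.1 w.2 (simulating_adv alg xS yS wa0 wb0) s]
  = outA_event alg x yS wb0 s `*` outB_event alg xS y wa0 s.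
Proof.
apply/seteqP; split => [[wa wb] [t [hA hB]] | [wa wb] [[tA hA] [tB hB]]] /=.
  have [_ eoA _ eoB _] := exec_simulating alg xS yS wa0 wb0 x y wa wb t.
  by split; exists t; rewrite -?eoA -?eoB.
exists (maxn tA tB).
have [_ -> _ -> _] := exec_simulating alg xS yS wa0 wb0 x y wa wb (maxn tA tB).
by rewrite (outA_stable (leq_maxl tA tB)) ?(outB_stable (leq_maxr tA tB)) ?hA ?hB.
Qed.

Definition action_enc (a : action) : option bool + seq bool :=
  match a with Send s => inl s | Halt o => inr o end.

Definition action_dec (e : option bool + seq bool) : action :=
  match e with inl s => Send s | inr o => Halt o end.

Lemma action_encK : cancel action_enc action_dec. Proof. by case. Qed.

HB.instance Definition _ := Countable.copy action (can_type action_encK).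

Section Measurability.
Context d (T : measurableType d).

Lemma measurable_set_cst (P : Prop) : measurable [set _ : T | P].
Proof.
have [p | np] := pselect P.
  by rewrite (_ : [set _ | P] = setT) //; apply/seteqP; split.
by rewrite (_ : [set _ | P] = set0) //; apply/seteqP; split.
Qed.

Lemma measurable_countable_preimage (C : countType) (f : T -> C) :
  (forall c, measurable (f @^-1` [set c])) -> forall A : set C, measurable (f @^-1` A).
Proof.
move=> mf A; have -> : f @^-1` A = \bigcup_c (f @^-1` (A `&` [set c])).
  by apply/seteqP; split => [w Afw | w [c _ []]] //; exists (f w).
apply: countable_bigcupT_measurable => [|c]; first exact: countableP.
have [Ac | nAc] := pselect (A c).
  by rewrite setIidr; [exact: mf | move=> _ ->].
rewrite (_ : A `&` _ = set0) ?preimage_set0 //.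
by apply/seteqP; split => // w [Aw wc]; apply: nAc; rewrite -wc.
Qed.

Variables (X Y OmA OmB : Type) (alg : algorithm X Y OmA OmB).
Variables (x : X) (y : Y) (wa : T -> OmA) (wb : T -> OmB) (adv : adversary).
Hypothesis measurable_alice : forall h a, measurable [set w | alice alg x (wa w) h = a].
Hypothesis measurable_bob : forall h b, measurable [set w | bob alg y (wb w) h = b].

Lemma measurable_exec t (A : set exec_state) :
  measurable ((fun w => exec alg x y (wa w) (wb w) adv t) @^-1` A).
Proof.
elim: t A => [|t IH] A; first exact: (measurable_set_cst (A ([::], None, [::], None, [::]))).
pose run w := exec alg x y (wa w) (wb w) adv t.
pose g w := (run w, alice alg x (wa w) (histA (run w)), bob alg y (wb w) (histB (run w))).
(* [G] performs one step with the two actions frozen into constant strategies. *)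
pose G (p : exec_state * action * action) :=
  exec_step (Algorithm (fun _ (_ : unit) _ => p.1.2) (fun _ (_ : unit) _ => p.2)) x y tt tt adv p.1.1.
have -> : (fun w => exec alg x y (wa w) (wb w) adv t.+1) = G \o g.
  apply/funext => w.
  change (exec_step alg x y (wa w) (wb w) adv (run w) = G (g w)).
  by rewrite /G /g; case: (run w) => [[[[? ?] ?] ?] ?].
rewrite comp_preimage; apply: measurable_countable_preimage => -[[st aA] aB].
have -> : g @^-1` [set (st, aA, aB)] = run @^-1` [set st] `&`
    [set w | alice alg x (wa w) (histA st) = aA] `&` [set w | bob alg y (wb w) (histB st) = aB].
  apply/seteqP; split => w /=; rewrite /g.
    by case=> -> -> ->.
  by case=> [[-> ->] ->].
by apply: measurableI; [apply: measurableI|]; [exact: IH | exact: measurable_alice | exact: measurable_bob].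
Qed.

End Measurability.

Lemma measurable_outA_event d (OmA : measurableType d) (X Y OmB : Type)
    (alg : algorithm X Y OmA OmB) x y wb s :
  (forall h a, measurable [set w : OmA | alice alg x w h = a]) ->
  measurable (outA_event alg x y wb s).
Proof.
move=> measurable_alice.
have -> : outA_event alg x y wb s = \bigcup_t
    ((fun w => exec alg x y w wb noiseless t) @^-1` [set st | outA st = Some s]).
  by apply/seteqP; split => w /= [t]; [exists t | move=> _; exists t].
apply: bigcupT_measurable => t.
by apply: (measurable_exec (wa := id) (wb := fun=> wb)) => // h b; exact: measurable_set_cst.
Qed.

Lemma measurable_outB_event d (OmB : measurableType d) (X Y OmA : Type)
    (alg : algorithm X Y OmA OmB) x y wa s :
  (forall h b, measurable [set w : OmB | bob alg y w h = b]) ->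
  measurable (outB_event alg x y wa s).
Proof.
move=> measurable_bob.
have -> : outB_event alg x y wa s = \bigcup_t
    ((fun w => exec alg x y wa w noiseless t) @^-1` [set st | outB st = Some s]).
  by apply/seteqP; split => w /= [t]; [exists t | move=> _; exists t].
apply: bigcupT_measurable => t.
by apply: (measurable_exec (wa := fun=> wa) (wb := id)) => // h a; exact: measurable_set_cst.
Qed.

Local Open Scope ereal_scope.

Lemma probability_nonempty d (T : measurableType d) (R : realType) (P : probability T R) :
  [set: T] !=set0.
Proof.
apply/set0P/eqP => T0; have := probability_setT P.
by rewrite T0 measure0 => -[] /eqP; rewrite eq_sym oner_eq0.
Qed.

Lemma probability_disjoint_le_half d (T : measurableType d) (R : realType)
    (P : probability T R) (A B : set T) :
  measurable A -> measurable B -> A `&` B = set0 ->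
  P A <= (2^-1)%:E \/ P B <= (2^-1)%:E.
Proof.
move=> mA mB AB0; have [|gtA] := leP (P A) (2^-1)%:E; first by left.
right; rewrite leNgt; apply/negP => gtB.
have := probability_le1 P (measurableU _ _ mA mB); rewrite measureU // leNgt => /negP; apply.
have -> : 1 = (2^-1)%:E + (2^-1)%:E :> \bar R by rewrite -EFinD -div1r -splitr.
exact: lteD.
Qed.

Lemma product_measure_setX_le_half d1 d2 (T1 : measurableType d1) (T2 : measurableType d2)
    (R : realType) (P1 : probability T1 R) (P2 : probability T2 R) (A : set T1) (B : set T2) :
  measurable A -> measurable B -> P1 A <= (2^-1)%:E \/ P2 B <= (2^-1)%:E ->
  (P1 \x P2) (A `*` B) <= (2^-1)%:E.
Proof.
move=> mA mB small; rewrite product_measure1E //.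
case: small => small.
  by rewrite -[leRHS]mule1; apply: lee_pmul => //; exact: probability_le1.
by rewrite -[leRHS]mul1e; apply: lee_pmul => //; exact: probability_le1.
Qed.

Theorem theorem6
  (R : realType) (X Y : Type) (pi : protocol X Y) (L : nat)
  (d1 d2 : measure_display) (OmA : measurableType d1) (OmB : measurableType d2)
  (PA : probability OmA R) (PB : probability OmB R)
  (alg : algorithm X Y OmA OmB) :
  (* the input protocol is not trivial (its transcript depends on the inputs) *)
  (exists x y x' y', transcript pi L x y <> transcript pi L x' y') ->
  (* the parties' strategies are measurable in their private randomness *)
  (forall x h a, measurable [set w : OmA | alice alg x w h = a]) ->
  (forall y h a, measurable [set w : OmB | bob alg y w h = a]) ->
  (* the algorithm always terminates when there is no noise *)
  (forall x y wa wb, terminates alg x y wa wb noiseless) ->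
  exists adv : adversary, exists x : X, exists y : Y,
    (forall wa wb, finitely_many_flips alg x y wa wb adv) /\
    (PA \x PB) [set w : OmA * OmB | succeeds alg x y w.1 w.2 adv (transcript pi L x y)]
      <= (2^-1)%:E.
Proof.
move=> [x [y [x' [y' neq_tr]]]] measurable_alice measurable_bob terminating.
have [wa0 _] := probability_nonempty PA; have [wb0 _] := probability_nonempty PB.
have mA a s := measurable_outA_event y' wb0 s (measurable_alice a).
have mB b s := measurable_outB_event x wa0 s (measurable_bob b).
suff [a [b small]] : exists a b,
    PA (outA_event alg a y' wb0 (transcript pi L a b)) <= (2^-1)%:E \/
    PB (outB_event alg x b wa0 (transcript pi L a b)) <= (2^-1)%:E.
  exists (simulating_adv alg x y' wa0 wb0), a, b; split => [wa wb|].
    exact: simulating_adv_finitely_many_flips (terminating _ _ _ _) (terminating _ _ _ _).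
  by rewrite succeeds_simulating_adv; apply: product_measure_setX_le_half (mA _ _) (mB _ _) small.
have [eq_tr | /eqP neq_trA] := eqVneq (transcript pi L x y) (transcript pi L x y').
  have neq_trB : transcript pi L x y' <> transcript pi L x' y' by rewrite -eq_tr.
  have [small | small] := probability_disjoint_le_half PB (mB y' _) (mB y' _)
    (outB_event_disjoint alg x y' wa0 neq_trB).
    by exists x, y'; right.
  by exists x', y'; right.
have [small | small] := probability_disjoint_le_half PA (mA x _) (mA x _)
  (outA_event_disjoint alg x y' wb0 neq_trA).
  by exists x, y; left.
by exists x, y'; left.
Qed.
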